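(* Let $\mathbf{u}$ be quasi-definite with SMOP $(P_n)$, $c\in\mathbb{C}$ with $P_n(c)\ne0$ for all $n$, and $\widetilde{\mathbf{u}}=(x-c)\mathbf{u}$ with associated polynomials of the first kind $(\widetilde P^{(1)}_n)$. Let $\mathbf{u}^\alpha$ be a quasi-definite functional whose SMOP is $R_n(x)=\frac{\mathbf{u}_0}{\widetilde{\mathbf{u}}_0}\big[(x-c)P^{(1)}_n(x)-P_{n+1}(x)\big]$, $n\ge0$. Then $(\widetilde P^{(1)}_n)_{n\ge0}$ is the SMOP of $(x-c)\mathbf{u}^\alpha$; i.e., up to a nonzero constant factor, $\widetilde{\mathbf{u}}^{(1)}=(x-c)\mathbf{u}^\alpha$ is a canonical Christoffel transformation of $\mathbf{u}^\alpha$.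
   Context: Linear functionals on complex polynomials, moments $\mathbf{u}_n$, $\langle(x-c)\mathbf{u},p\rangle=\langle\mathbf{u},(x-c)p\rangle$. Quasi-definite: all leading principal Hankel minors nonzero; SMOP = sequence of monic orthogonal polynomials, satisfying $xP_n=P_{n+1}+b_nP_n+a_nP_{n-1}$, $P_{-1}=0$, $P_0=1$, $a_n\neq0$. Associated polynomials of the first kind: monic, $xP^{(1)}_n=P^{(1)}_{n+1}+b_{n+1}P^{(1)}_n+a_{n+1}P^{(1)}_{n-1}$, $P^{(1)}_{-1}=0,P^{(1)}_0=1$; $\widetilde{\mathbf{u}}^{(1)}$ is a functional with SMOP $(\widetilde P^{(1)}_n)$. (The polynomials $R_n$ are monic of degree $n$ and satisfy a three-term recurrence with nonzero coefficients, so such $\mathbf{u}^\alpha$ exists.) *)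

From HB Require Import structures.
From mathcomp Require Import all_boot all_order all_algebra.
From mathcomp Require Import reals.
From mathcomp.real_closed Require Import complex.
Set Implicit Arguments. Unset Strict Implicit. Unset Printing Implicit Defensive.
Import Order.TTheory GRing.Theory Num.Theory.
Local Open Scope ring_scope.

(* A linear functional u on C[x] is represented by its sequence of moments
   u_n = <u, x^n>; its action on a polynomial is obtained by linearity. *)
Definition functional (C : nzRingType) := nat -> C.

Definition act (C : nzRingType) (u : functional C) (p : {poly C}) : C :=
  \sum_(i < size p) p`_i * u i.

Definition mulXc (C : nzRingType) (c : C) (u : functional C) : functional C :=
  fun n => act u (('X - c%:P) * 'X^n).

Definition quasi_definite (C : comNzRingType) (u : functional C) : Prop :=
  forall n : nat, \det (\matrix_(i < n.+1, j < n.+1) u (i + j)%N) != 0.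

Definition is_SMOP (C : nzRingType) (u : functional C) (P : nat -> {poly C}) : Prop :=
  (forall n, P n \is monic) /\ (forall n, size (P n) = n.+1) /\
  (forall n m, n != m -> act u (P n * P m) = 0) /\
  (forall n, act u (P n * P n) != 0).

(* Monic polynomials generated by a three-term recurrence
   x Q_n = Q_{n+1} + b_n Q_n + a_n Q_{n-1}, Q_{-1} = 0, Q_0 = 1. *)
Fixpoint ttrr_aux (C : nzRingType) (a b : nat -> C) (n : nat)
  : {poly C} * {poly C} :=
  match n with
  | 0 => (1, 0)
  | k.+1 => let (q, qm) := ttrr_aux a b k in
            (('X - (b k)%:P) * q - a k *: qm, q)
  end.
Definition ttrr (C : nzRingType) (a b : nat -> C) (n : nat) : {poly C} :=
  (ttrr_aux a b n).1.

Definition satisfies_ttrr (C : nzRingType) (P : nat -> {poly C}) (a b : nat -> C) : Prop :=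
  P 0 = 1 /\
  (forall n, 'X * P n = P n.+1 + b n *: P n + (if n is k.+1 then a n *: P k else 0)) /\
  (forall n, (0 < n)%N -> a n != 0).

Definition assoc1 (C : nzRingType) (a b : nat -> C) : nat -> {poly C} :=
  ttrr (fun n => a n.+1) (fun n => b n.+1).

From HB Require Import structures.
From mathcomp Require Import all_boot all_order all_algebra.
From mathcomp Require Import reals.
From mathcomp.real_closed Require Import complex.
From mathcomp Require Import ring zify.
Set Implicit Arguments. Unset Strict Implicit. Unset Printing Implicit Defensive.
Import Order.TTheory GRing.Theory Num.Theory.
Local Open Scope ring_scope.

(* The heart of the argument is the classical description of a canonical
   Christoffel transformation: if v has SMOP Y, given by the three-term
   recurrence with coefficients (al, be), and Y_n(c) <> 0 for all n, then
   (x - c) v has as SMOP the kernel polynomials K_n, determined by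
   (x - c) K_n = Y_{n+1} - d_n Y_n with d_n = Y_{n+1}(c) / Y_n(c); they obey
   the recurrence with coefficients al_n d_n / d_{n-1} and
   be_{n+1} + d_{n+1} - d_n (lemmas [kernel_ttrr] and [christoffel_SMOP], the
   latter via a Favard-type criterion).
   Applied to u this computes the coefficients (ta, tb) of the SMOP of
   (x - c) u from (a, b) and d (SMOPs are unique and recurrence coefficients
   are determined by the polynomials).  The polynomials R_n of u^alpha obey
   the recurrence of the shifted sequence (P_{n+1}) except for R_1, and
   R_n(c) = - k P_{n+1}(c), so their ratios at c are d_{n+1}.  Applying the
   Christoffel lemma to u^alpha therefore yields a SMOP of (x - c) u^alpha
   whose recurrence coefficients are exactly the shifted (ta, tb): it is the
   sequence of associated polynomials of the first kind of (Pt_n). *)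

Section LinearFunctionals.
Variable F : fieldType.
Implicit Types (u : functional F) (p q : {poly F}).

Lemma actE u p N : (size p <= N)%N -> act u p = \sum_(i < N) p`_i * u i.
Proof.
move=> le_pN; rewrite /act (big_ord_widen N (fun i => p`_i * u i) le_pN).
rewrite big_mkcond /=; apply: eq_bigr => i _; case: ifP => // /negbT.
by rewrite -leqNgt => le_pi; rewrite nth_default // mul0r.
Qed.

Lemma act0 u : act u 0 = 0.
Proof. by rewrite /act size_poly0 big_ord0. Qed.

Lemma actD u p q : act u (p + q) = act u p + act u q.
Proof.
pose N := maxn (size p) (size q).
rewrite !(@actE u _ N) ?leq_maxl ?leq_maxr ?(leq_trans (size_polyD _ _)) //.
by rewrite -big_split; apply: eq_bigr => i _; rewrite coefD mulrDl.
Qed.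

Lemma actZ u k p : act u (k *: p) = k * act u p.
Proof.
rewrite !(@actE u _ (size p)) ?size_scale_leq // mulr_sumr.
by apply: eq_bigr => i _; rewrite coefZ mulrA.
Qed.

Lemma actB u p q : act u (p - q) = act u p - act u q.
Proof. by rewrite actD -scaleN1r actZ mulN1r. Qed.

Lemma act_sum u n (G : 'I_n -> {poly F}) :
  act u (\sum_(i < n) G i) = \sum_(i < n) act u (G i).
Proof. exact: (big_morph (act u) (actD u) (act0 u)). Qed.

Lemma act_mulXc c u p : act (mulXc c u) p = act u (('X - c%:P) * p).
Proof.
have -> : ('X - c%:P) * p = \sum_(i < size p) p`_i *: (('X - c%:P) * 'X^i).
  rewrite -{1}[p]coefK poly_def mulr_sumr.
  by apply: eq_bigr => i _; rewrite scalerAr.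
by rewrite act_sum; apply: eq_bigr => i _; rewrite actZ.
Qed.

End LinearFunctionals.

Section Orthogonality.
Variable F : fieldType.
Implicit Types (v : functional F) (p q : {poly F}) (Y Z : nat -> {poly F}).

Lemma size_sub_eq_coef p q m : (size p <= m.+1)%N -> (size q <= m.+1)%N ->
  p`_m = q`_m -> (size (p - q)%R <= m)%N.
Proof.
move=> le_p le_q eq_pq; apply/leq_sizeP => j; rewrite leq_eqVlt.
case/orP=> [/eqP <-|lt_mj]; first by rewrite coefB eq_pq subrr.
by rewrite coefB !nth_default ?subrr // (leq_trans _ lt_mj).
Qed.

Lemma monic_coef p m : p \is monic -> size p = m.+1 -> p`_m = 1.
Proof. by move=> /monicP + size_p; rewrite /lead_coef size_p. Qed.

Lemma SMOP_ext v Y Z : (forall n, Y n = Z n) -> is_SMOP v Y -> is_SMOP v Z.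
Proof.
move=> eYZ [mon [sz [orth nrm]]].
by split; [|split; [|split]] => [n|n|n m|n]; rewrite -?eYZ; auto.
Qed.

Lemma orth_low v Y : is_SMOP v Y -> forall n q, (size q <= n)%N ->
  act v (Y n * q) = 0.
Proof.
move=> [mon [sz [orth _]]] n.
suff orth_m m q : (m <= n)%N -> (size q <= m)%N -> act v (Y n * q) = 0.
  by move=> q; apply: orth_m.
elim: m q => [|m IHm] q le_mn le_qm.
  by move: le_qm; rewrite leqn0 size_poly_eq0 => /eqP->; rewrite mulr0 act0.
have le_rem : (size (q - q`_m *: Y m)%R <= m)%N.
  apply: size_sub_eq_coef => //; first by rewrite (leq_trans (size_scale_leq _ _)) ?sz.
  by rewrite coefZ (monic_coef (mon m) (sz m)) mulr1.
rewrite -(subrK (q`_m *: Y m) q) mulrDr actD IHm ?(ltnW le_mn) //.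
by rewrite -scalerAr actZ orth ?mulr0 ?addr0 // neq_ltn le_mn orbT.
Qed.

Lemma SMOP_orth_eq0 v Y : is_SMOP v Y -> forall n p, (size p <= n)%N ->
  (forall j, (j < n)%N -> act v (p * Y j) = 0) -> p = 0.
Proof.
move=> [mon [sz [orth nrm]]].
elim=> [|n IHn] p le_pn orth_p; first by apply/eqP; rewrite -size_poly_eq0 -leqn0.
set l := p`_n.
have p_eq : p = l *: Y n.
  apply/eqP; rewrite -subr_eq0; apply/eqP/IHn => [|j lt_jn].
    apply: size_sub_eq_coef => //; first by rewrite (leq_trans (size_scale_leq _ _)) ?sz.
    by rewrite coefZ (monic_coef (mon n) (sz n)) mulr1.
  rewrite mulrBl actB -scalerAl actZ orth_p ?(ltn_trans lt_jn) //.
  by rewrite orth ?mulr0 ?subr0 // neq_ltn lt_jn orbT.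
have /eqP := orth_p n (ltnSn n); rewrite p_eq -scalerAl actZ mulf_eq0.
by rewrite (negbTE (nrm n)) orbF => /eqP->; rewrite scale0r.
Qed.

Lemma SMOP_unique v Y Z : is_SMOP v Y -> is_SMOP v Z -> forall n, Y n = Z n.
Proof.
move=> HY HZ n; have [monY [szY _]] := HY; have [monZ [szZ [orthZ _]]] := HZ.
apply/eqP; rewrite -subr_eq0; apply/eqP/(SMOP_orth_eq0 HY (n := n)).
  apply: size_sub_eq_coef; rewrite ?szY ?szZ //.
  by rewrite (monic_coef (monY n) (szY n)) (monic_coef (monZ n) (szZ n)).
move=> j lt_jn; rewrite mulrBl actB (orth_low HZ) ?szY //.
by have [_ [_ [orthY _]]] := HY; rewrite orthY ?subr0 // neq_ltn lt_jn orbT.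
Qed.

End Orthogonality.

Section ThreeTermRecurrence.
Variable F : fieldType.
Implicit Types (al be : nat -> F) (Y : nat -> {poly F}).

Lemma ttrr0 al be : ttrr al be 0 = 1.
Proof. by []. Qed.

Lemma ttrrS al be n : ttrr al be n.+1 =
  ('X - (be n)%:P) * ttrr al be n - al n *: (if n is k.+1 then ttrr al be k else 0).
Proof.
have auxS k : ttrr_aux al be k.+1 = (('X - (be k)%:P) * (ttrr_aux al be k).1
    - al k *: (ttrr_aux al be k).2, (ttrr_aux al be k).1).
  by rewrite /=; case: (ttrr_aux al be k).
by rewrite /ttrr auxS; case: n => [|n] //; rewrite auxS.
Qed.

Lemma ttrr2 al be n : ttrr al be n.+2 =
  ('X - (be n.+1)%:P) * ttrr al be n.+1 - al n.+1 *: ttrr al be n.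
Proof. by rewrite ttrrS. Qed.

Lemma ttrr1 al be : ttrr al be 1 = 'X - (be 0)%:P.
Proof. by rewrite ttrrS ttrr0 scaler0 subr0 mulr1. Qed.

Lemma ttrr_unique al be Y : Y 0 = 1 ->
  (forall n, Y n.+1 = ('X - (be n)%:P) * Y n
                      - al n *: (if n is k.+1 then Y k else 0)) ->
  forall n, Y n = ttrr al be n.
Proof.
move=> Y0 YS; suff Y_pair n : Y n = ttrr al be n /\ Y n.+1 = ttrr al be n.+1.
  by move=> n; case: (Y_pair n).
elim: n => [|n [IH1 IH2]]; first by rewrite YS ttrrS Y0.
by split=> //; rewrite YS ttrrS /= -IH1 -IH2.
Qed.

Lemma sat_ttrr Y al be : satisfies_ttrr Y al be -> forall n, Y n = ttrr al be n.
Proof.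
move=> [Y0 [YX _]]; apply: ttrr_unique => // n.
by case: n (YX n) => [|k] XY; rewrite /= mulrBl XY -!mul_polyC; ring.
Qed.

(* Only the coefficients al_n with n > 0 enter the recurrence. *)
Lemma ttrr_ext al be al' be' : (forall n, be n = be' n) ->
  (forall n, al n.+1 = al' n.+1) -> forall n, ttrr al be n = ttrr al' be' n.
Proof.
move=> e_be e_al; apply: ttrr_unique => // n.
by rewrite ttrrS e_be; case: n => [|n]; rewrite ?scaler0 ?e_al.
Qed.

Lemma ttrr_monic_size al be n :
  ttrr al be n \is monic /\ size (ttrr al be n) = n.+1.
Proof.
suff pair_ms k : (ttrr al be k \is monic /\ size (ttrr al be k) = k.+1) /\
    (ttrr al be k.+1 \is monic /\ size (ttrr al be k.+1) = k.+2).
  by case: (pair_ms n).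
elim: k => [|k [[mon0 sz0] [mon1 sz1]]].
  by rewrite ttrrS ttrr0 mulr1 scaler0 subr0 monic1 size_poly1 monicXsubC size_XsubC.
split=> //; rewrite ttrrS.
have sz_lead : size (('X - (be k.+1)%:P) * ttrr al be k.+1) = k.+3.
  by rewrite size_monicM ?monicXsubC ?monic_neq0 // size_XsubC sz1.
have lt_tail : (size (- (al k.+1 *: ttrr al be k)) < k.+3)%N.
  by rewrite size_polyN (leq_ltn_trans (size_scale_leq _ _)) // sz0.
rewrite -sz_lead in lt_tail; split; last by rewrite size_polyDl.
by apply/monicP; rewrite lead_coefDl // lead_coef_monicM ?monicXsubC //; apply/monicP.
Qed.

Lemma ttrr_coef_inj al be al' be' :
  (forall n, ttrr al be n = ttrr al' be' n) ->
  forall n, be n = be' n /\ ((0 < n)%N -> al n = al' n).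
Proof.
move=> eY [|n].
  by split=> //; have := eY 1%N; rewrite !ttrr1 => /addrI /oppr_inj /polyC_inj.
have [[mon sz] [mon' sz']] := (ttrr_monic_size al be n.+1, ttrr_monic_size al be n).
have lin_rel : (be' n.+1 - be n.+1) *: ttrr al be n.+1 =
               (al n.+1 - al' n.+1) *: ttrr al be n.
  have := eY n.+2; rewrite !ttrr2 -!eY => /eqP; rewrite -subr_eq0 => /eqP e0.
  by apply/eqP; rewrite -subr_eq0 -e0 !scalerBl -!mul_polyC; apply/eqP; ring.
have e_be : be n.+1 = be' n.+1.
  have := congr1 (fun p : {poly F} => p`_n.+1) lin_rel.
  rewrite !coefZ (monic_coef mon sz) nth_default ?sz' // mulr0 mulr1.
  by move=> /eqP; rewrite subr_eq0 => /eqP.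
split=> // _; move: lin_rel; rewrite e_be subrr scale0r => /esym/eqP.
by rewrite scaler_eq0 subr_eq0 (negbTE (monic_neq0 mon')) orbF => /eqP.
Qed.

Lemma favard w al be :
  (forall n, al n.+1 != 0) -> (forall n, act w (ttrr al be n.+1) = 0) ->
  act w 1 != 0 -> is_SMOP w (ttrr al be).
Proof.
move=> al_nz w_ann w1; set Q := ttrr al be.
have XQ n : 'X * Q n.+1 = Q n.+2 + be n.+1 *: Q n.+1 + al n.+1 *: Q n.
  by rewrite /Q ttrr2 -!mul_polyC; ring.
have orthXn j n : (j < n)%N -> act w ('X^j * Q n) = 0.
  elim: j n => [|j IHj] [|[|m]] // lt_jn; try by rewrite expr0 mul1r w_ann.
  rewrite exprSr -mulrA XQ !mulrDr !actD -!scalerAr !actZ !IHj ?mulr0 ?addr0 //; lia.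
(* <w, x^n Q_n> = al_n ... al_1 w(1) is nonzero. *)
have normXn n : act w ('X^n * Q n) != 0.
  elim: n => [|n IHn]; first by rewrite expr0 mul1r.
  rewrite exprSr -mulrA XQ !mulrDr !actD -!scalerAr !actZ.
  by rewrite (orthXn n n.+2) ?(orthXn n n.+1) // mulr0 !add0r mulf_neq0.
have orth_deg n (q : {poly F}) : (size q <= n)%N -> act w (Q n * q) = 0.
  move=> le_qn; rewrite -[q]coefK poly_def mulr_sumr act_sum big1 // => i _.
  by rewrite -scalerAr actZ [Q n * _]mulrC orthXn ?mulr0 // (leq_trans (ltn_ord i)).
have mon n : Q n \is monic := (ttrr_monic_size al be n).1.
have sz n : size (Q n) = n.+1 := (ttrr_monic_size al be n).2.
split; [by []|split; [by []|split]] => [n m|n].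
  rewrite neq_ltn => /orP[lt_nm|lt_mn]; last by rewrite orth_deg ?sz.
  by rewrite mulrC orth_deg ?sz.
have -> : Q n * Q n = Q n * (Q n - 'X^n) + 'X^n * Q n by ring.
rewrite actD orth_deg ?add0r //.
by apply: size_sub_eq_coef; rewrite ?sz ?size_polyXn // (monic_coef (mon n) (sz n)) coefXn eqxx.
Qed.

Lemma SMOP_ttrr_act v al be : is_SMOP v (ttrr al be) ->
  (forall n, act v (ttrr al be n.+1) = 0) /\ act v 1 != 0.
Proof.
move=> [_ [_ [orth nrm]]]; split=> [n|]; last by have := nrm 0%N; rewrite ttrr0 mulr1.
by have := orth n.+1 0%N isT; rewrite ttrr0 mulr1.
Qed.

End ThreeTermRecurrence.

Section KernelPolynomials.
Variable F : fieldType.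

Definition kratio (Y : nat -> {poly F}) (c : F) (n : nat) : F :=
  (Y n.+1).[c] / (Y n).[c].

Definition kernel_a (al d : nat -> F) (n : nat) : F := al n * d n / d n.-1.
Definition kernel_b (be d : nat -> F) (n : nat) : F := be n.+1 + d n.+1 - d n.

(* One step of the recurrence of the kernel polynomials: if
   (x - c) K_n = y1 - d0 y0 and (x - c) K_(n+1) = y2 - d1 y1, then the
   combination below of these two expressions is y3 - d2 y2. *)
Lemma kernel_step (c b1 b2 a1 a2 d0 d1 d2 : F) (y0 y1 y2 y3 : {poly F}) :
  y2 = ('X - b1%:P) * y1 - a1 *: y0 ->
  y3 = ('X - b2%:P) * y2 - a2 *: y1 ->
  d1 * d0 = (c - b1) * d0 - a1 ->
  d2 * d1 = (c - b2) * d1 - a2 ->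
  d0 != 0 ->
  y3 - d2 *: y2 = ('X - (b2 + d2 - d1)%:P) * (y2 - d1 *: y1)
                  - (a1 * d1 / d0) *: (y1 - d0 *: y0).
Proof.
move=> e2 e3 rel1 rel2 d0_nz.
have a1E : a1 = (c - b1 - d1) * d0 by rewrite mulrBl rel1; ring.
have a2E : a2 = (c - b2 - d2) * d1 by rewrite mulrBl rel2; ring.
have kaE : a1 * d1 / d0 = (c - b1 - d1) * d1 by rewrite a1E; field.
by rewrite kaE e3 e2 a1E a2E -!mul_polyC; ring.
Qed.

Variables (al be : nat -> F) (c : F).
Local Notation Y := (ttrr al be).
Local Notation d := (kratio Y c).
Hypothesis Yc_nz : forall n, (Y n).[c] != 0.

Lemma kratio_nz n : d n != 0.
Proof. by rewrite mulf_neq0 ?invr_eq0. Qed.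

Lemma kratio0 : d 0 = c - be 0.
Proof. by rewrite /kratio ttrrS ttrr0 scaler0 subr0 mulr1 hornerC divr1 hornerXsubC. Qed.

Lemma kratio_rec n : d n.+1 * d n = (c - be n.+1) * d n - al n.+1.
Proof.
rewrite /kratio ttrr2 hornerD hornerN hornerZ hornerM hornerXsubC.
by field; rewrite !Yc_nz.
Qed.

Lemma kernel_ttrr n :
  ('X - c%:P) * ttrr (kernel_a al d) (kernel_b be d) n = Y n.+1 - d n *: Y n.
Proof.
pose K := ttrr (kernel_a al d) (kernel_b be d).
suff pair_eq m : ('X - c%:P) * K m = Y m.+1 - d m *: Y m /\
                 ('X - c%:P) * K m.+1 = Y m.+2 - d m.+1 *: Y m.+1.
  by case: (pair_eq n).
elim: m => [|m [IH1 IH2]].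
  have al1E : al 1 = (c - be 1 - d 1) * (c - be 0).
    by rewrite -kratio0 mulrBl kratio_rec; ring.
  rewrite /K ttrr2 !ttrr1 !ttrr0 /kernel_b kratio0 al1E; set e := d 1.
  by rewrite -!mul_polyC; split; rewrite !(polyCD, polyCB, polyCM, polyCN); ring.
split=> //; rewrite /K ttrr2 -/K mulrBr mulrA [('X - c%:P) * _]mulrC -mulrA IH2.
rewrite -scalerAr IH1; symmetry; apply: kernel_step; rewrite ?ttrr2 //.
- exact: kratio_rec.
- exact: kratio_rec.
- exact: kratio_nz.
Qed.

Lemma christoffel_SMOP v : is_SMOP v Y -> (forall n, al n.+1 != 0) ->
  is_SMOP (mulXc c v) (ttrr (kernel_a al d) (kernel_b be d)).
Proof.
move=> HY al_nz; have [v_ann v1] := SMOP_ttrr_act HY.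
apply: favard => [n|n|].
- by rewrite /kernel_a !mulf_neq0 ?invr_eq0 ?kratio_nz.
- by rewrite act_mulXc kernel_ttrr actB actZ !v_ann mulr0 subr0.
- rewrite act_mulXc -[X in _ * X](ttrr0 (kernel_a al d) (kernel_b be d)).
  by rewrite kernel_ttrr actB actZ v_ann ttrr0 sub0r oppr_eq0 mulf_neq0 ?kratio_nz.
Qed.

End KernelPolynomials.

Section AssociatedPolynomials.
Variable F : fieldType.

Lemma christoffel_coefficients (u : functional F) (a b ta tb : nat -> F) c :
  is_SMOP u (ttrr a b) -> (forall n, a n.+1 != 0) ->
  (forall n, (ttrr a b n).[c] != 0) -> is_SMOP (mulXc c u) (ttrr ta tb) ->
  forall n, tb n = kernel_b b (kratio (ttrr a b) c) n /\
            ((0 < n)%N -> ta n = kernel_a a (kratio (ttrr a b) c) n).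
Proof.
move=> HP a_nz Pc HPt; apply: ttrr_coef_inj.
exact: SMOP_unique HPt (christoffel_SMOP Pc HP a_nz).
Qed.

(* The polynomials R_n = k ((x - c) P^(1)_n - P_(n+1)), where P = ttrr a b
   and P^(1) = assoc1 a b: R_0 = k (b_0 - c) is constant, so R_0 is monic
   exactly when k (b_0 - c) = 1. *)
Lemma assoc_combination_monic (a b : nat -> F) c k :
  k *: (('X - c%:P) * assoc1 a b 0 - ttrr a b 1) \is monic -> k * (b 0 - c) = 1.
Proof.
rewrite /assoc1 ttrr0 ttrr1 mulr1 => /monicP.
have -> : 'X - c%:P - ('X - (b 0)%:P) = (b 0 - c)%:P by rewrite polyCB; ring.
by rewrite -mul_polyC -polyCM lead_coefC.
Qed.

Section AssociatedCombination.
Variables (a b : nat -> F) (c k : F).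
Hypothesis hk : k * (b 0 - c) = 1.

Definition comb_b (n : nat) : F := if n is 0 then b 1 - k * a 1 else b n.+1.
Local Notation R := (ttrr (fun n => a n.+1) comb_b).

Lemma assoc_combination_ttrr n :
  k *: (('X - c%:P) * assoc1 a b n - ttrr a b n.+1) = R n.
Proof.
move: n; apply: ttrr_unique => [|[|n]] /=.
- rewrite /assoc1 ttrr0 ttrr1 mulr1 -(polyC1) -hk -mul_polyC.
  by rewrite !(polyCD, polyCB, polyCM, polyCN); ring.
- rewrite /assoc1 ttrr2 !ttrr1 ttrr0 scaler0 subr0 mulr1.
  apply/eqP; rewrite -subr_eq0; apply/eqP.
  transitivity ((1 - k * (b 0 - c)) * (k * a 1))%:P; last by rewrite hk subrr mul0r.
  by rewrite -!mul_polyC !(polyCD, polyCB, polyCM, polyCN); ring.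
- by rewrite /assoc1 !ttrr2 -!mul_polyC; ring.
Qed.

Lemma assoc_combination_nz : k != 0.
Proof. by apply: contra_eq_neq hk => ->; rewrite mul0r eq_sym oner_neq0. Qed.

(* Since x - c vanishes at c, R_n(c) = - k P_(n+1)(c). *)
Lemma assoc_combination_at n : (R n).[c] = - k * (ttrr a b n.+1).[c].
Proof. by rewrite -assoc_combination_ttrr !hornerE subrr mul0r sub0r mulrN mulNr. Qed.

Hypothesis Pc_nz : forall n, (ttrr a b n).[c] != 0.

Lemma assoc_combination_at_nz n : (R n).[c] != 0.
Proof. by rewrite assoc_combination_at mulf_neq0 ?oppr_eq0 ?assoc_combination_nz. Qed.

Lemma assoc_combination_kratio n : kratio R c n = kratio (ttrr a b) c n.+1.
Proof.
rewrite /kratio !assoc_combination_at; field.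
by rewrite oppr_eq0 assoc_combination_nz !Pc_nz.
Qed.

End AssociatedCombination.

Lemma christoffel_associated (u ua : functional F) (P Pt : nat -> {poly F})
    (a b ta tb : nat -> F) c :
  is_SMOP u P -> satisfies_ttrr P a b -> (forall n, (P n).[c] != 0) ->
  is_SMOP (mulXc c u) Pt -> satisfies_ttrr Pt ta tb ->
  is_SMOP ua (fun n => (u 0%N / mulXc c u 0%N) *:
                         (('X - c%:P) * assoc1 a b n - P n.+1)) ->
  is_SMOP (mulXc c ua) (assoc1 ta tb).
Proof.
move=> HP satP Pc HPt satPt HR; have eP := sat_ttrr satP.
have [_ [_ a_nz]] := satP; have a_nzS n : a n.+1 != 0 by exact: a_nz.
have Pc' n : (ttrr a b n).[c] != 0 by rewrite -eP.
have coefE := christoffel_coefficients (SMOP_ext eP HP) a_nzS Pc'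
                (SMOP_ext (sat_ttrr satPt) HPt).
set k := u 0%N / _ in HR.
have hk : k * (b 0 - c) = 1.
  by have [monR _] := HR; apply: (assoc_combination_monic (a := a)); rewrite -eP; exact: monR.
have HR' : is_SMOP ua (ttrr (fun n => a n.+1) (comb_b a b k)).
  by apply: SMOP_ext HR => n; rewrite eP assoc_combination_ttrr.
have HRc := christoffel_SMOP (assoc_combination_at_nz hk Pc') HR' (fun n => a_nzS n.+1).
apply: SMOP_ext HRc => n; apply: ttrr_ext => m.
  by rewrite (coefE m.+1).1 /kernel_b !assoc_combination_kratio.
by rewrite (coefE m.+2).2 // /kernel_a (assoc_combination_kratio hk Pc' m.+1) (assoc_combination_kratio hk Pc' m).
Qed.

End AssociatedPolynomials.

Local Open Scope complex_scope.

Theorem mainTheorem11 (R : realType)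
  (u : functional R[i]) (P : nat -> {poly R[i]}) (a b : nat -> R[i]) (c : R[i])
  (Pt : nat -> {poly R[i]}) (ta tb : nat -> R[i])
  (ua : functional R[i]) :
  quasi_definite u -> is_SMOP u P -> satisfies_ttrr P a b ->
  (forall n, (P n).[c] != 0) ->
  is_SMOP (mulXc c u) Pt -> satisfies_ttrr Pt ta tb ->
  quasi_definite ua ->
  is_SMOP ua (fun n => (u 0%N / mulXc c u 0%N) *:
                        (('X - c%:P) * assoc1 a b n - P n.+1)) ->
  is_SMOP (mulXc c ua) (assoc1 ta tb).
Proof.
move=> _ HP satP Pc HPt satPt _ HR.
exact: christoffel_associated HP satP Pc HPt satPt HR.
Qed.
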